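(* Let $G$ be a graph, let $D$ be a minimum dominating set of $G$ and $\gamma=|D|$, and let $\nabla$ be an integer with $\nabla>\nabla_1^B(G)$. Let $$\hat D=\{v\in V(G): \text{for all } A\subseteq D\setminus\{v\} \text{ with } N(v)\subseteq N[A] \text{ we have } |A|>2\nabla-1\}.$$ Then $|\hat D\setminus D|<\rho(G)\cdot\gamma$.
   Context: Graphs are finite, undirected and simple. $N(v)$ is the open neighbourhood of $v$, $N[v]=N(v)\cup\{v\}$, and $N[A]=\bigcup_{a\in A}N[a]$. A dominating set is a set $D$ with $N[D]=V(G)$. A graph $H$ is a $1$-shallow minor of $G$ if it is obtained from $G$ by deleting vertices and edges and contracting pairwise vertex-disjoint connected subgraphs of radius at most $1$. $\nabla_1^B(G)$ is the maximum of $|E(H)|/|V(H)|$ over all bipartite $1$-shallow minors $H$ of $G$. The Hall ratio $\rho(G)$ is $\max\{|V(H)|/\alpha(H): H\subseteq G\}$, where $\alpha(H)$ is the size of a largest independent set of $H$. *)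

From HB Require Import structures.
From mathcomp Require Import all_boot all_order all_algebra.
Set Implicit Arguments. Unset Strict Implicit. Unset Printing Implicit Defensive.
Import Order.TTheory GRing.Theory Num.Theory.

(* A graph is T : finType with an edge relation e : rel T
   (assumed symmetric and irreflexive in the theorem). *)
Section Graphs.
Variables (T : finType) (e : rel T).

Definition nbh (v : T) : {set T} := [set u | e v u].
Definition cnbh (v : T) : {set T} := v |: nbh v.
Definition cnbhs (A : {set T}) : {set T} := \bigcup_(a in A) cnbh a.

Definition dominating (D : {set T}) : bool := cnbhs D == [set: T].

Definition min_dominating (D : {set T}) : bool :=
  dominating D && [forall D' : {set T}, dominating D' ==> (#|D| <= #|D'|)%N].

Definition subgraphb (S : {set T}) (F : {set {set T}}) : bool :=
  [forall f in F, [&& #|f| == 2%N, f \subset S &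
     [forall x in f, forall y in f, (x != y) ==> e x y]]].

Definition indepb (S : {set T}) (F : {set {set T}}) (I : {set T}) : bool :=
  (I \subset S) && [forall f in F, ~~ (f \subset I)].

Definition alpha (S : {set T}) (F : {set {set T}}) : nat :=
  \max_(I : {set T} | indepb S F I) #|I|.

(* Hall ratio rho(G) = max over subgraphs H of |V(H)| / alpha(H)
   (the empty subgraph contributes 0/0 = 0 by MathComp's convention). *)
Definition hall_ratio : rat :=
  \big[Num.max/0%R]_(H : {set T} * {set {set T}} | subgraphb H.1 H.2)
     ((#|H.1|%:R : rat) / (alpha H.1 H.2)%:R)%R.

(* H = ('I_n, E) is a 1-shallow minor of G: there are pairwise disjoint branch
   sets br i, each inducing a connected subgraph of radius <= 1 (a centre c i
   in br i adjacent to all other vertices of br i), such that every edge ij of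
   H is realised by a G-edge between br i and br j. *)
Definition one_shallow_minor (n : nat) (E : {set {set 'I_n}}) : bool :=
  [exists br : {ffun 'I_n -> {set T}}, exists c : {ffun 'I_n -> T},
    [&& [forall i, (c i \in br i) && (br i \subset cnbh (c i))],
        [forall i, forall j, (i != j) ==> [disjoint br i & br j]] &
        [forall f in E, forall i in f, forall j in f,
           (i != j) ==> [exists u in br i, exists v in br j, e u v]]]].

End Graphs.

Definition simple_edges (n : nat) (E : {set {set 'I_n}}) : bool :=
  [forall f in E, #|f| == 2%N].

Definition bipartiteb (n : nat) (E : {set {set 'I_n}}) : bool :=
  [exists col : {ffun 'I_n -> bool},
    [forall f in E, forall i in f, forall j in f, (i != j) ==> (col i != col j)]].

(* Every 1-shallow minor of G has at most |V(G)| vertices, hence is isomorphic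
   to a graph on 'I_n with n <= |V(G)|; so the max ranges over those. *)
Definition nabla1B (T : finType) (e : rel T) : rat :=
  \big[Num.max/0%R]_(n < #|T|.+1)
    \big[Num.max/0%R]_(E : {set {set 'I_n}} |
        [&& simple_edges E, bipartiteb E & one_shallow_minor e E])
      ((#|E|%:R : rat) / (n%:R))%R.

Definition dhat (T : finType) (e : rel T) (D : {set T}) (nab : int) : {set T} :=
  [set v | [forall A : {set T},
     ((A \subset D :\ v) && (nbh e v \subset cnbhs e A)) ==>
       (2 * nab - 1 < (#|A|%:Z))%R]].

From HB Require Import structures.
From mathcomp Require Import all_boot all_order all_algebra.
From mathcomp Require Import zify.
Import Order.TTheory GRing.Theory Num.Theory.
Set Implicit Arguments. Unset Strict Implicit. Unset Printing Implicit Defensive.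

(* Let X = D^ \ D.  As |X| <= rho(G) alpha(G[X]), it suffices to show that
   every independent set I of G[X] has fewer than gamma vertices.  Map every
   vertex u to a vertex of D dominating it (d itself for d in D); the fibres of
   the vertices outside I are stars centred in D, and together with the
   singletons of I they are the branch sets of a bipartite 1-shallow minor on
   I u D.  For a in I the images A of the neighbours of a satisfy
   A <= D \ {a} and N(a) <= N[A], so a has more than 2 nabla - 1 neighbours in
   the minor by the definition of D^.  If |I| >= gamma, the minor would have at
   least 2 nabla |I| edges on at most 2 |I| vertices, against
   nabla > nabla_1^B(G). *)

Lemma forall_set2_neq (I : finType) (a b : I) (P : I -> I -> bool) :
  P a b -> P b a ->
  [forall i in [set a; b], forall j in [set a; b], (i != j) ==> P i j].
Proof.
move=> Pab Pba; apply/forall_inP => i /set2P[]-> ;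
  apply/forall_inP => j /set2P[]->; by rewrite ?eqxx ?Pab ?Pba ?implybT.
Qed.

Lemma set2_inj_sides (T : finType) (side : pred T) (a1 a2 b1 b2 : T) :
  side a1 -> ~~ side a2 -> side b1 -> ~~ side b2 ->
  [set a1; a2] = [set b1; b2] -> (a1, a2) = (b1, b2).
Proof.
move=> sa1 sa2 sb1 sb2 eq_ab.
have /set2P[a1E|a1E] : a1 \in [set b1; b2] by rewrite -eq_ab set21.
- have /set2P[a2E|a2E] : a2 \in [set b1; b2] by rewrite -eq_ab set22.
  + by rewrite a2E sb1 in sa2.
  + by rewrite a1E a2E.
- by rewrite a1E (negbTE sb2) in sa1.
Qed.

Section BipartiteMinors.
Variables (T : finType) (e : rel T).
Hypothesis e_sym : symmetric e.

Lemma nabla1B_ge0 : (0 <= nabla1B e)%R.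
Proof. exact: bigmax_ge_id. Qed.

Lemma le_nabla1B n (E : {set {set 'I_n}}) : (n <= #|T|)%N ->
  simple_edges E -> bipartiteb E -> one_shallow_minor e E ->
  ((#|E|%:R : rat) / n%:R <= nabla1B e)%R.
Proof.
rewrite -ltnS => lt_nT sE bE mE.
apply: le_trans (le_bigmax_cond _ _ (j := Ordinal lt_nT) isT) => /=.
by apply: le_bigmax_cond; rewrite sE bE mE.
Qed.

(* The hypotheses describe a 1-shallow minor on W with branch sets [br x]
   centred at x, bipartite along [side], with one edge for each pair of Q. *)
Lemma le_nabla1B_model (W : {set T}) (side : pred T) (br : T -> {set T})
    (Q : {set T * T}) :
  {in W, forall x, (x \in br x) && (br x \subset cnbh e x)} ->
  {in W &, forall x y, x != y -> [disjoint br x & br y]} ->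
  {in Q, forall p, [&& p.1 \in W, p.2 \in W, side p.1, ~~ side p.2 &
                      [exists u in br p.1, exists v in br p.2, e u v]]} ->
  ((#|Q|%:R : rat) / #|W|%:R <= nabla1B e)%R.
Proof.
move=> brW brD QP.
have [->|[p0 /QP/and5P[x0W _ _ _ _]]] := set_0Vmem Q.
  by rewrite cards0 mul0r nabla1B_ge0.
pose v (i : 'I_#|W|) := enum_val i.
pose idx : T -> 'I_#|W| := enum_rank_in x0W.
have vW i : v i \in W := enum_valP i.
have idxK : {in W, cancel idx v} := enum_rankK_in x0W.
pose col i := side (v i).
have colQ p : p \in Q -> col (idx p.1) && ~~ col (idx p.2).
  by case/QP/and5P=> p1W p2W s1 s2 _; rewrite /col !idxK ?s1.
pose E := [set [set idx p.1; idx p.2] | p in Q].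
have cardE : #|E| = #|Q|.
  apply: card_in_imset => p q pQ qQ eq_pq.
  have vE r : r \in Q -> v @: [set idx r.1; idx r.2] = [set r.1; r.2].
    by case/QP/and5P=> r1W r2W _ _ _; rewrite imsetU1 imset_set1 !idxK.
  have := congr1 (fun f : {set 'I_#|W|} => v @: f) eq_pq; rewrite /= !vE //.
  case/QP/and5P: pQ => _ _ p1 p2 _; case/QP/and5P: qQ => _ _ q1 q2 _.
  by move/(set2_inj_sides p1 p2 q1 q2); rewrite -!surjective_pairing.
apply: le_trans (le_nabla1B (E := E) (max_card W) _ _ _); first by rewrite cardE.
- apply/forall_inP => _ /imsetP[p /colQ pQ ->].
  by move: pQ; rewrite cards2; have [->|] := eqVneq (idx p.1) (idx p.2); rewrite ?andbN.
- apply/existsP; exists [ffun i => col i]; apply/forall_inP => _ /imsetP[p pQ ->].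
  by apply: forall_set2_neq; rewrite !ffunE; case/andP: (colQ p pQ) => -> /negbTE->.
- apply/existsP; exists [ffun i => br (v i)]; apply/existsP; exists [ffun i => v i].
  apply/and3P; split.
  + by apply/forallP => i; rewrite !ffunE; apply: brW.
  + apply/forallP => i; apply/forallP => j; apply/implyP => ij; rewrite !ffunE.
    by apply: brD; rewrite ?vW ?(inj_eq enum_val_inj).
  + apply/forall_inP => _ /imsetP[p pQ ->].
    have /and5P[p1W p2W _ _ /exists_inP[u up /exists_inP[w wp euw]]] := QP p pQ.
    apply: forall_set2_neq; rewrite !ffunE !idxK //; apply/exists_inP.
    * by exists u => //; apply/exists_inP; exists w.
    * by exists w => //; apply/exists_inP; exists u; rewrite // e_sym.
Qed.

End BipartiteMinors.

Section Dominators.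
Variables (T : finType) (e : rel T) (D : {set T}).
Hypothesis D_dom : dominating e D.

Lemma dominating_card_gt0 : (0 < #|T|)%N -> (0 < #|D|)%N.
Proof.
case/card_gt0P=> t _; have : t \in cnbhs e D by rewrite (eqP D_dom) inE.
by case/bigcupP=> d dD _; apply/card_gt0P; exists d.
Qed.

Definition dominator (u : T) : T :=
  if u \in D then u else odflt u [pick d in D | u \in cnbh e d].

Lemma dominatorP u : (dominator u \in D) && (u \in cnbh e (dominator u)).
Proof.
rewrite /dominator; case: ifPn => [uD|_]; first by rewrite uD /cnbh setU11.
case: pickP => [d //|none] /=.
have : u \in cnbhs e D by rewrite (eqP D_dom) inE.
by case/bigcupP=> d dD ud; move: (none d); rewrite dD ud.
Qed.

Lemma dominator_in u : dominator u \in D.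
Proof. by case/andP: (dominatorP u). Qed.

Lemma mem_cnbh_dominator u : u \in cnbh e (dominator u).
Proof. by case/andP: (dominatorP u). Qed.

Lemma dominator_id u : u \in D -> dominator u = u.
Proof. by rewrite /dominator => ->. Qed.

Variable I : {set T}.
Hypotheses (I_indep : {in I &, forall x y, ~~ e x y}) (I_D : [disjoint I & D]).

Definition cell (x : T) : {set T} :=
  if x \in I then [set x] else [set u | (u \notin I) && (dominator u == x)].

Definition reach (a : T) : {set T} := [set d in D | [exists u in cell d, e a u]].

Definition links : {set T * T} := [set p | (p.1 \in I) && (p.2 \in reach p.1)].

Lemma notin_I_of_D d : d \in D -> d \notin I.
Proof. by move=> dD; rewrite (disjointFl I_D dD). Qed.

Lemma card_links : #|links| = (\sum_(a in I) #|reach a|)%N.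
Proof.
rewrite -sum1_card (eq_bigl (fun p => (p.1 \in I) && (p.2 \in reach p.1))).
  rewrite -(pair_big_dep (mem I) (fun a d => d \in reach a) (fun _ _ => 1%N)).
  by apply: eq_bigr => a _; rewrite sum1_card.
by move=> p; rewrite inE.
Qed.

Lemma reach_sub a : a \in I -> reach a \subset D :\ a.
Proof.
move=> aI; apply/subsetP => d; rewrite !inE => /andP[dD _]; rewrite dD andbT.
by apply: contraTneq dD => ->; rewrite (disjointFr I_D aI).
Qed.

Lemma nbh_sub_cnbhs_reach a : a \in I -> nbh e a \subset cnbhs e (reach a).
Proof.
move=> aI; apply/subsetP => u; rewrite inE => eau.
have uI : u \notin I by apply: contraL eau => uI; apply: I_indep.
apply/bigcupP; exists (dominator u); last exact: mem_cnbh_dominator.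
rewrite inE dominator_in; apply/exists_inP; exists u => //.
by rewrite /cell (negbTE (notin_I_of_D (dominator_in u))) inE uI eqxx.
Qed.

Hypothesis e_sym : symmetric e.

Lemma le_links_nabla1B : ((#|links|%:R : rat) / #|I :|: D|%:R <= nabla1B e)%R.
Proof.
apply: (le_nabla1B_model e_sym (side := mem I) (br := cell)).
- move=> x xW; rewrite /cell; case: ifPn => xI.
    by rewrite set11 sub1set /cnbh setU11.
  have xD : x \in D by move: xW; rewrite inE (negbTE xI).
  rewrite inE xI dominator_id // eqxx; apply/subsetP => u; rewrite inE.
  by case/andP=> _ /eqP <-; apply: mem_cnbh_dominator.
- move=> x y _ _ xy; rewrite /cell; case: ifPn => xI; case: ifPn => yI.
  + by rewrite disjoints1 inE.
  + by rewrite disjoints1 inE xI.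
  + by rewrite disjoint_sym disjoints1 inE yI.
  + rewrite -setI_eq0; apply/eqP/setP => u; rewrite !inE.
    apply/negP => /and3P[/andP[_ /eqP ux] _ /eqP uy].
    by rewrite -ux -uy eqxx in xy.
- move=> [a d]; rewrite !inE /= => /andP[aI /andP[dD /exists_inP[u du eau]]].
  rewrite aI dD orbT notin_I_of_D //=; apply/exists_inP; exists a.
    by rewrite /cell aI set11.
  by apply/exists_inP; exists u.
Qed.

Lemma card_reach_dhat (m : nat) a :
  a \in I -> a \in dhat e D m -> (2 * m <= #|reach a|)%N.
Proof.
move=> aI; rewrite inE => /forallP/(_ (reach a)).
by rewrite reach_sub // nbh_sub_cnbhs_reach //= => /implyP lt_reach; lia.
Qed.

Lemma card_lt_dhat_independent (m : nat) :
  (0 < #|D|)%N -> (nabla1B e < m%:R)%R -> I \subset dhat e D m ->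
  (#|I| < #|D|)%N.
Proof.
move=> D_gt0 lt_nabla I_dhat.
have links_ge : (#|I| * (2 * m) <= #|links|)%N.
  rewrite card_links -sum_nat_const; apply: leq_sum => a aI.
  by apply: card_reach_dhat => //; apply: (subsetP I_dhat).
have W_gt0 : (0 < #|I :|: D|)%N.
  by apply: leq_trans D_gt0 (subset_leq_card (subsetUr I D)).
have links_lt : (#|links| < m * #|I :|: D|)%N.
  have := le_links_nabla1B; rewrite ler_pdivrMr ?ltr0n // => le_links.
  by rewrite -(ltr_nat rat) natrM (le_lt_trans le_links) // ltr_pM2r ?ltr0n.
have [W_le _] := leq_card_setU I D; nia.
Qed.

End Dominators.

Section HallRatio.
Variables (T : finType) (e : rel T).

Definition induced_edges (S : {set T}) : {set {set T}} :=
  [set f : {set T} | [&& #|f| == 2, f \subset S &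
              [forall x in f, forall y in f, (x != y) ==> e x y]]].

Lemma subgraph_induced (S : {set T}) : subgraphb e S (induced_edges S).
Proof. by apply/forall_inP => f; rewrite inE. Qed.

Lemma indep_induced_nonadjacent (e_sym : symmetric e) (e_irr : irreflexive e) S J :
  indepb S (induced_edges S) J -> {in J &, forall x y, ~~ e x y}.
Proof.
case/andP=> JS /forall_inP J_indep x y xJ yJ; apply/negP => exy.
have xy : x != y by apply: contraTneq exy => ->; rewrite e_irr.
suff /J_indep : [set x; y] \in induced_edges S by rewrite subUset !sub1set xJ yJ.
rewrite inE cards2 xy subUset !sub1set !(subsetP JS) //=.
by apply: forall_set2_neq; rewrite // e_sym.
Qed.

Lemma alpha_lt (S : {set T}) (F : {set {set T}}) (k : nat) : (0 < k)%N ->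
  (forall J, indepb S F J -> (#|J| < k)%N) -> (alpha S F < k)%N.
Proof.
move=> k_gt0 lt_k; rewrite -(prednK k_gt0) ltnS.
by apply/bigmax_leqP => J /lt_k J_lt; rewrite -ltnS prednK.
Qed.

Lemma alpha_gt0 S F x : subgraphb e S F -> x \in S -> (0 < alpha S F)%N.
Proof.
move=> /forall_inP SF xS.
suff x_indep : indepb S F [set x].
  by apply: leq_trans (leq_bigmax_cond _ x_indep); rewrite cards1.
rewrite /indepb sub1set xS; apply/forall_inP => f /SF/and3P[/eqP f2 _ _].
by apply/negP => /subset_leq_card; rewrite cards1 f2.
Qed.

Lemma le_hall_ratio S F : subgraphb e S F ->
  ((#|S|%:R : rat) / (alpha S F)%:R <= hall_ratio e)%R.
Proof. by move=> SF; apply: (le_bigmax_cond _ _ (j := (S, F))). Qed.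

Lemma hall_ratio_gt0 : (0 < #|T|)%N -> (0 < hall_ratio e)%R.
Proof.
case/card_gt0P=> t _.
have t_sub : subgraphb e [set t] set0 by apply/forall_inP => f; rewrite inE.
apply: lt_le_trans (le_hall_ratio t_sub).
by rewrite cards1 mul1r invr_gt0 ltr0n (alpha_gt0 (x := t)) ?set11.
Qed.

Lemma card_lt_hall_ratio_mul S F (k : nat) : (0 < #|T|)%N ->
  subgraphb e S F -> (alpha S F < k)%N ->
  ((#|S|%:R : rat) < hall_ratio e * k%:R)%R.
Proof.
move=> T_gt0 SF alpha_lt_k.
have k_gt0 : (0 < k)%N by apply: leq_ltn_trans alpha_lt_k.
have [->|[x xS]] := set_0Vmem S.
  by rewrite cards0 mulr_gt0 ?hall_ratio_gt0 ?ltr0n.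
have alpha_pos := alpha_gt0 SF xS.
apply: lt_le_trans (ler_wpM2r (ler0n _ _) (le_hall_ratio SF)).
rewrite mulrAC ltr_pdivlMr ?ltr0n // -!natrM ltr_nat ltn_pmul2l //.
by apply/card_gt0P; exists x.
Qed.

End HallRatio.

Theorem lemma3 (T : finType) (e : rel T)
  (e_sym : symmetric e) (e_irr : irreflexive e) (T_nonempty : (0 < #|T|)%N)
  (D : {set T}) (hD : min_dominating e D)
  (nab : int) (hnab : (nabla1B e < nab%:~R)%R) :
  ((#|dhat e D nab :\: D|%:R : rat) < hall_ratio e * (#|D|%:R))%R.
Proof.
have D_dom : dominating e D by case/andP: hD.
have nab_ge0 : (0 <= nab)%R.
  by rewrite -(ler0z rat); apply: ltW (le_lt_trans (nabla1B_ge0 e) hnab).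
have [m nabE] : exists m : nat, nab = m by exists `|nab|%N; lia.
rewrite nabE in hnab *; set X := dhat e D m :\: D.
have D_gt0 := dominating_card_gt0 D_dom T_nonempty.
apply: (card_lt_hall_ratio_mul T_nonempty (subgraph_induced e X)).
apply: alpha_lt => // J J_indep.
have JX : J \subset X by case/andP: J_indep.
have J_nonadj := indep_induced_nonadjacent e_sym e_irr J_indep.
apply: (card_lt_dhat_independent D_dom J_nonadj) => //.
- by rewrite disjoints_subset (subset_trans JX) // /X setDE subsetIr.
- exact: hnab.
- exact: subset_trans JX (subsetDl _ _).
Qed.
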